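(* For all positive integers $n$ and $r$ with $n\geqslant r+1$, there exists a proper edge coloring $c: E(K_n)\to\mathbb{R}$ such that $\dim W_c(K_n, r)\geqslant\binom{r+1}{2}$.
   Context: All graphs are finite, simple and undirected; $K_n$ is the complete graph on $n$ vertices. For a positive integer $r$ and a graph $G$ with a proper edge coloring $c: E(G)\to\mathbb{R}$, $W_c(G,r)$ is the real vector space of all functions $\phi: E(G)\to\mathbb{R}$ for which there exist real polynomials $\{P_v(x)\}_{v\in V(G)}$ with $\deg P_v\leqslant r-1$ for every vertex $v$ and $P_u(c(uv))=P_v(c(uv))=\phi(uv)$ for every edge $uv\in E(G)$. *)

From HB Require Import structures.
From mathcomp Require Import all_boot all_order all_algebra.
From mathcomp Require Import reals.
Set Implicit Arguments. Unset Strict Implicit. Unset Printing Implicit Defensive.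
Import Order.TTheory GRing.Theory Num.Theory.
Local Open Scope ring_scope.

Definition Kedge (n : nat) := {e : {set 'I_n} | #|e| == 2%N}.

Definition proper_coloring (R : realType) (n : nat) (c : Kedge n -> R) : Prop :=
  forall e f : Kedge n, e <> f -> (val e :&: val f != set0) -> c e <> c f.

(* W_c(K_n, r): functions phi on edges such that there are polynomials P_v of
   degree <= r-1 (i.e. size <= r) with P_u(c(uv)) = P_v(c(uv)) = phi(uv). *)
Definition inW (R : realType) (n r : nat) (c : Kedge n -> R)
    (phi : {ffun Kedge n -> R^o}) : Prop :=
  exists P : 'I_n -> {poly R},
    (forall v, (size (P v) <= r)%N) /\
    (forall (e : Kedge n) (v : 'I_n), v \in val e -> (P v).[c e] = phi e).

From HB Require Import structures.
From mathcomp Require Import all_boot all_order all_algebra.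
From mathcomp Require Import reals.
Local Open Scope ring_scope.
Set Implicit Arguments. Unset Strict Implicit.
Import GRing.Theory Num.Theory.

(* Colour the edge uv of K_n by u + v.  For any polynomial p of degree < r the
   function uv |-> p(u) p(v) then lies in W_c(K_n, r), witnessed at the vertex
   v by P_v(x) = p(v) p(x - v).  For each 2-subset S of {0, ..., r} take for p
   the polynomial of degree r - 1 vanishing exactly on {0, ..., r} \ S: the
   resulting function is nonzero on the edge S and vanishes on every other
   edge T inside {0, ..., r}, because T has an endpoint outside S.  These
   C(r+1, 2) functions are thus linearly independent. *)

Lemma cards2_set2 (T : finType) (e : {set T}) (v : T) :
  #|e| == 2%N -> v \in e -> exists2 w, w != v & e = [set v; w].
Proof.
case/cards2P=> [x [y [xy ->]]] /set2P [->|->].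
  by exists y; rewrite // eq_sym.
by exists x; rewrite // setUC.
Qed.

Lemma free_mktuple_eval_diag (K : fieldType) (T : finType) (m : nat)
    (f : 'I_m -> {ffun T -> K^o}) (x : 'I_m -> T) :
  (forall i j, (f i (x j) == 0) = (i != j)) -> free [tuple f i | i < m].
Proof.
move=> f_diag; apply/freeP => k sum_eq0 j.
have := congr1 (fun g : {ffun T -> K^o} => g (x j)) sum_eq0.
rewrite sum_ffunE (bigD1 j) // big1 => [|i /= ij]; rewrite !ffunE ?nth_mktuple /=.
  by rewrite addr0 => /eqP; rewrite scaler_eq0 f_diag eqxx orbF => /eqP.
by apply/eqP; rewrite scaler_eq0 f_diag ij orbT.
Qed.

Section VertexSumColoring.
Variable R : realType.

Definition vertex_sum (n : nat) (e : Kedge n) : R := \sum_(v in val e) (v : nat)%:R.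

Definition edge_prod (n : nat) (p : {poly R}) : {ffun Kedge n -> R^o} :=
  [ffun e : Kedge n => \prod_(v in val e) p.[(v : nat)%:R]].

Lemma vertex_sum_proper (n : nat) : proper_coloring (@vertex_sum n).
Proof.
move=> e f ef /set0Pn [v]; rewrite inE => /andP [ve vf].
have [a av ea] := cards2_set2 (valP e) ve.
have [b bv fb] := cards2_set2 (valP f) vf.
rewrite /vertex_sum ea fb !big_setU1 ?big_set1 ?inE 1?eq_sym // => /addrI/eqP.
rewrite eqr_nat => /eqP/val_inj ab; apply: ef; apply: val_inj.
by rewrite ea fb ab.
Qed.

Lemma edge_prod_inW (n r : nat) (p : {poly R}) :
  (size p <= r)%N -> inW r (@vertex_sum n) (edge_prod n p).
Proof.
move=> size_p.
exists (fun v : 'I_n => p.[(v : nat)%:R] *: (p \Po ('X - ((v : nat)%:R)%:P))).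
split=> [v | e v ve].
  by rewrite (leq_trans (size_scale_leq _ _)) // size_comp_poly2 ?size_XsubC.
have [w wv ew] := cards2_set2 (valP e) ve.
rewrite ffunE hornerZ horner_comp hornerXsubC /vertex_sum ew.
by rewrite !big_setU1 ?big_set1 ?inE 1?eq_sym //= addrAC subrr add0r.
Qed.

Definition avoid_poly (m : nat) (S : {set 'I_m}) : {poly R} :=
  \prod_(a <- [seq k%:R | k : 'I_m <- enum (~: S)]) ('X - a%:P).

Lemma size_avoid_poly (m : nat) (S : {set 'I_m}) : size (avoid_poly S) = (m - #|S|).+1.
Proof.
rewrite size_prod_XsubC size_map -cardE; congr _.+1.
have le_S_m : (#|S| <= m)%N by rewrite -[m in (_ <= m)%N]card_ord max_card.
by apply/eqP; rewrite -(eqn_add2l #|S|) cardsC subnKC // card_ord.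
Qed.

Lemma root_avoid_poly (m : nat) (S : {set 'I_m}) (k : 'I_m) :
  root (avoid_poly S) (k : nat)%:R = (k \notin S).
Proof.
have nat_ord_inj : injective (fun k : 'I_m => (k : nat)%:R : R).
  by move=> i j /eqP; rewrite eqr_nat => /eqP/val_inj.
by rewrite root_prod_XsubC (mem_map nat_ord_inj) mem_enum inE.
Qed.

Lemma prod_avoid_poly_eq0 (m : nat) (S T : {set 'I_m}) :
  (\prod_(v in T) (avoid_poly S).[(v : nat)%:R] == 0) = ~~ (T \subset S).
Proof.
apply/prodf_eq0/subsetPn => [[v vT /eqP pv0] | [v vT vS]].
  by exists v; rewrite // -root_avoid_poly; apply/rootP.
by exists v; rewrite // -[_ == 0]/(root _ _) root_avoid_poly.
Qed.

End VertexSumColoring.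

Theorem lemma3p3 (R : realType) (n r : nat) :
  (0 < r)%N -> (r.+1 <= n)%N ->
  exists c : Kedge n -> R,
    proper_coloring c /\
    exists B : ('C(r.+1, 2)).-tuple {ffun Kedge n -> R^o},
      (forall phi, phi \in B -> inW r c phi) /\ free B.
Proof.
move=> r_gt0 le_r1_n.
exists (@vertex_sum R n); split; first exact: vertex_sum_proper.
have card_pairs : 'C(r.+1, 2) = #|[set S : {set 'I_r.+1} | #|S| == 2%N]|.
  by rewrite card_draws card_ord.
pose S i := enum_val (cast_ord card_pairs i).
have S2 i : #|S i| == 2%N by have := enum_valP (cast_ord card_pairs i); rewrite inE.
have S_inj : injective S by move=> i j /enum_val_inj/cast_ord_inj.
have widen_inj : injective (widen_ord le_r1_n).
  by move=> u v /(congr1 val) uv; apply: val_inj.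
have edge2 i : #|widen_ord le_r1_n @: S i| == 2%N by rewrite card_imset.
exists [tuple edge_prod n (avoid_poly R (S i)) | i < 'C(r.+1, 2)]; split.
  move=> phi /mapP [i _ ->]; apply: edge_prod_inW.
  by rewrite size_avoid_poly (eqP (S2 i)) subSS subn1 prednK.
pose edge j : Kedge n := exist (fun e : {set 'I_n} => #|e| == 2%N) _ (edge2 j).
apply: (@free_mktuple_eval_diag _ _ _ _ edge) => i j.
rewrite ffunE /= big_imset /=; last by move=> u v _ _ /widen_inj.
rewrite prod_avoid_poly_eq0 -(inj_eq S_inj) eq_sym eqEcard.
by rewrite (eqP (S2 i)) (eqP (S2 j)) leqnn andbT.
Qed.
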